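(* Let $G$ be a finite simple graph, $1\le k\le\operatorname{mat}(G)$, and let $M$ be a $k$-admissable matching of $G$ that is a perfect matching of $G$. Let $M=M_1\cup\dots\cup M_r$ be a $k$-admissable partition of $M$ for $G$. If $x$ is a vertex of some edge of $M_i$ and $y$ is a vertex of some edge of $M_j$ with $i\neq j$, then $x$ and $y$ lie in different connected components of $G$.
   Context: $\operatorname{mat}(G)$ is the matching number; a perfect matching covers every vertex. Two edges form a gap if they are disjoint and no edge of $G$ joins a vertex of one to a vertex of the other. A sequence $(a_1,\dots,a_n)$ of integers is $k$-admissable if $a_i\ge1$ and $\sum a_i\le n+k-1$. A $k$-admissable partition of a matching $M$ for $G$ is a decomposition $M=M_1\cup\dots\cup M_r$ into nonempty pairwise disjoint subsets such that edges from different $M_i$'s always form a gap in $G$, $(|M_1|,\dots,|M_r|)$ is $k$-admissable, and the induced subgraph of $G$ on $\bigcup_{e\in M_i}e$ is a forest for each $i$. $M$ is $k$-admissable if it has such a partition. *)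

(* A finite simple graph is a symmetric irreflexive relation
   e on a finType T; an edge is a 2-element vertex set {u,v} with e u v. *)
From mathcomp Require Import all_boot.
Set Implicit Arguments. Unset Strict Implicit. Unset Printing Implicit Defensive.

Section Graphs.
Variable T : finType.
Variable e : rel T.

Definition simple_graph : Prop := symmetric e /\ irreflexive e.

Definition is_edge (f : {set T}) : bool :=
  [exists u, exists v, e u v && (f == [set u; v])].

Definition matching (M : {set {set T}}) : bool :=
  [forall f in M, is_edge f] &&
  [forall f in M, forall g in M, (f != g) ==> [disjoint f & g]].

Definition mat : nat := \max_(M : {set {set T}} | matching M) #|M|.

Definition perfect_matching (M : {set {set T}}) : bool :=
  matching M && [forall x : T, [exists f in M, x \in f]].

Definition gap (f g : {set T}) : bool :=
  [disjoint f & g] && [forall u in f, forall v in g, ~~ e u v].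

Definition vertices (N : {set {set T}}) : {set T} := \bigcup_(f in N) f.

(* the induced subgraph of G on S is a forest: it contains no cycle, i.e. no
   duplicate-free closed walk of length >= 3 with all vertices in S *)
Definition induced_forest (S : {set T}) : Prop :=
  forall c : seq T, (3 <= size c)%N -> uniq c -> all (fun v => v \in S) c ->
    ~~ cycle e c.
End Graphs.

Definition admissable_seq (k : nat) (s : seq nat) : bool :=
  all (fun a => 0 < a)%N s && (sumn s <= size s + k - 1)%N.

Definition admissable_partition (T : finType) (e : rel T) (k : nat)
  (M : {set {set T}}) (r : nat) (P : 'I_r -> {set {set T}}) : Prop :=
  (forall i, P i != set0) /\
  [/\ (forall i j, i != j -> [disjoint P i & P j]),
      \bigcup_(i < r) P i = M,
      (forall i j f g, i != j -> f \in P i -> g \in P j -> gap e f g),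
      admissable_seq k [seq #|P i| | i <- enum 'I_r]
    & (forall i, induced_forest e (vertices (P i)))].

Definition admissable_matching (T : finType) (e : rel T) (k : nat)
  (M : {set {set T}}) : Prop :=
  exists r (P : 'I_r -> {set {set T}}), admissable_partition e k M P.

(* Since M is perfect, the vertex sets V_i of the parts M_i cover G.  The gap
   condition makes them pairwise disjoint and forbids any edge between V_i and
   V_j for i <> j, so every V_i is closed under adjacency and hence a union of
   connected components. *)
From mathcomp Require Import all_boot.

Set Implicit Arguments.
Unset Strict Implicit.
Unset Printing Implicit Defensive.

Lemma mem_vertices (T : finType) (N : {set {set T}}) (f : {set T}) (x : T) :
  f \in N -> x \in f -> x \in vertices N.
Proof. by move=> fN xf; apply/bigcupP; exists f. Qed.

Lemma vertices_perfect_matching (T : finType) (e : rel T) (M : {set {set T}}) :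
  perfect_matching e M -> vertices M = setT.
Proof.
case/andP=> _ /forallP cover; apply/setP=> x; rewrite inE.
by have /existsP[f /andP[fM xf]] := cover x; exact: mem_vertices fM xf.
Qed.

Lemma gap_disjoint (T : finType) (e : rel T) (f g : {set T}) :
  gap e f g -> [disjoint f & g].
Proof. by case/andP. Qed.

Lemma gap_nonadjacent (T : finType) (e : rel T) (f g : {set T}) (u v : T) :
  gap e f g -> u \in f -> v \in g -> ~~ e u v.
Proof. by case/andP=> _ /forall_inP/(_ u) nadj /nadj/forall_inP; apply. Qed.

Section GapPartition.

Variables (T : finType) (e : rel T) (r : nat) (P : 'I_r -> {set {set T}}).
Hypothesis P_cover : forall x, exists i, x \in vertices (P i).
Hypothesis P_gap :
  forall i j f g, i != j -> f \in P i -> g \in P j -> gap e f g.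

Lemma vertices_part_inj i j x :
  x \in vertices (P i) -> x \in vertices (P j) -> i = j.
Proof.
move=> /bigcupP[f fi xf] /bigcupP[g gj xg]; case: (eqVneq i j) => // ij.
by rewrite (disjointFr (gap_disjoint (P_gap ij fi gj)) xf) in xg.
Qed.

Lemma nonadjacent_parts i j u v : i != j ->
  u \in vertices (P i) -> v \in vertices (P j) -> ~~ e u v.
Proof.
move=> ij /bigcupP[f fi uf] /bigcupP[g gj vg].
exact: gap_nonadjacent (P_gap ij fi gj) uf vg.
Qed.

Lemma closed_vertices_part i : closed e (vertices (P i)).
Proof.
move=> u v euv; have [a ua] := P_cover u; have [b vb] := P_cover v.
have ab : a = b.
  by apply/eqP; apply: contraTT euv => ab; exact: nonadjacent_parts ua vb.
subst b; apply/idP/idP => [ui | vi].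
- by rewrite (vertices_part_inj ui ua).
- by rewrite (vertices_part_inj vi vb).
Qed.

Lemma disconnected_parts i j x y : i != j ->
  x \in vertices (P i) -> y \in vertices (P j) -> ~~ connect e x y.
Proof.
move=> ij xi yj; apply/negP => /(closed_connect (closed_vertices_part i)).
by rewrite xi => /esym yi; move/eqP: ij; rewrite (vertices_part_inj yi yj).
Qed.

End GapPartition.

Theorem lemma5p8 (T : finType) (e : rel T) (k : nat) (M : {set {set T}})
  (r : nat) (P : 'I_r -> {set {set T}}) :
  simple_graph e ->
  (1 <= k)%N -> (k <= mat e)%N ->
  admissable_matching e k M ->
  perfect_matching e M ->
  admissable_partition e k M P ->
  forall (i j : 'I_r) (f g : {set T}) (x y : T),
    i != j -> f \in P i -> x \in f -> g \in P j -> y \in g ->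
    ~~ connect e x y.
Proof.
move=> _ _ _ _ perfectM [_ [_ PM P_gap _ _]] i j f g x y ij fi xf gj yg.
have P_cover z : exists i, z \in vertices (P i).
  have : z \in vertices M by rewrite (vertices_perfect_matching perfectM) inE.
  by rewrite -PM => /bigcupP[h /bigcupP[l _ hl] zh]; exists l; exact: mem_vertices hl zh.
exact: (disconnected_parts P_cover P_gap ij (mem_vertices fi xf) (mem_vertices gj yg)).
Qed.
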